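(* Let $G$ be a structured quadratic-bilinear system given by $(\mathcal C,\mathcal K,\mathcal B,\mathcal N,\mathcal H)$ with structured symmetric subsystem transfer functions $G_k$, and $\widehat G$ the reduced-order system obtained by projection with $V,W\in\mathbb C^{n\times r}$ of full column rank, with reduced symmetric subsystem transfer functions $\widehat G_k$. Let $\sigma\in\mathbb C$ be such that $\mathcal C,\mathcal K,\mathcal B,\mathcal N$ can be evaluated at $\sigma,2\sigma,3\sigma$, $\mathcal H$ at $(\sigma,\sigma),(2\sigma,\sigma),(\sigma,2\sigma)$, and $\mathcal K(\sigma),\mathcal K(2\sigma),\mathcal K(3\sigma)$ are invertible; assume also that $W^{\mathsf H}\mathcal K(s)V$ is invertible for $s\in\{\sigma,2\sigma,3\sigma\}$. Define $$V_1=\mathcal K(\sigma)^{-1}\mathcal B(\sigma),\qquad V_2=\mathcal K(2\sigma)^{-1}\big(\mathcal H(\sigma,\sigma)(V_1\otimes V_1)+\mathcal N(\sigma)(I_m\otimes V_1)\big),$$ $$V_3=\mathcal K(3\sigma)^{-1}\big(\mathcal H(2\sigma,\sigma)(V_2\otimes V_1)+\mathcal H(\sigma,2\sigma)(V_1\otimes V_2)+\mathcal N(2\sigma)(I_m\otimes V_2)\big),$$ $$W_1=\mathcal K(2\sigma)^{-\mathsf H}\mathcal C(2\sigma)^{\mathsf H},\qquad W_2=\mathcal K(3\sigma)^{-\mathsf H}\mathcal C(3\sigma)^{\mathsf H}.$$ Then: (a) If $\operatorname{span}(V)\supseteq\operatorname{span}([V_1\ V_2\ V_3])$ (and $W$ is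 any full-rank matrix of the same size as $V$), then $G_1(\sigma)=\widehat G_1(\sigma)$, $G_2(\sigma,\sigma)=\widehat G_2(\sigma,\sigma)$, $G_3(\sigma,\sigma,\sigma)=\widehat G_3(\sigma,\sigma,\sigma)$. (b) If $\operatorname{span}(V)\supseteq\operatorname{span}(V_1)$ and $\operatorname{span}(W)\supseteq\operatorname{span}(W_1)$, then $G_1(\sigma)=\widehat G_1(\sigma)$, $G_1(2\sigma)=\widehat G_1(2\sigma)$, $G_2(\sigma,\sigma)=\widehat G_2(\sigma,\sigma)$. (c) If $\operatorname{span}(V)\supseteq\operatorname{span}([V_1\ V_2])$ and $\operatorname{span}(W)\supseteq\operatorname{span}(W_2)$, then $G_1(\sigma)=\widehat G_1(\sigma)$, $G_1(3\sigma)=\widehat G_1(3\sigma)$, $G_2(\sigma,\sigma)=\widehat G_2(\sigma,\sigma)$, $G_3(\sigma,\sigma,\sigma)=\widehat G_3(\sigma,\sigma,\sigma)$.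
   Context: A structured quadratic-bilinear system (in frequency domain) with $n$ states, $m$ inputs and $p$ outputs is given by matrix-valued functions $\mathcal C:\mathbb C\to\mathbb C^{p\times n}$, $\mathcal K:\mathbb C\to\mathbb C^{n\times n}$, $\mathcal B:\mathbb C\to\mathbb C^{n\times m}$, $\mathcal N:\mathbb C\to\mathbb C^{n\times nm}$ with $\mathcal N(s)=[\mathcal N_1(s)\ \cdots\ \mathcal N_m(s)]$, $\mathcal N_j(s)\in\mathbb C^{n\times n}$, and $\mathcal H:\mathbb C\times\mathbb C\to\mathbb C^{n\times n^2}$. Its structured symmetric subsystem transfer functions are $G_1(s_1)=\mathcal C(s_1)g_1(s_1)$, $G_2(s_1,s_2)=\mathcal C(s_1+s_2)g_2(s_1,s_2)$, $G_3(s_1,s_2,s_3)=\mathcal C(s_1+s_2+s_3)g_3(s_1,s_2,s_3)$, where $g_1(s_1)=\mathcal K(s_1)^{-1}\mathcal B(s_1)$, $g_2(s_1,s_2)=\tfrac12\mathcal K(s_1+s_2)^{-1}\big(\mathcal H(s_1,s_2)(g_1(s_1)\otimes g_1(s_2))+\mathcal H(s_2,s_1)(g_1(s_2)\otimes g_1(s_1))+\mathcal N(s_1)(I_m\otimes g_1(s_1))+\mathcal N(s_2)(I_m\otimes g_1(s_2))\big)$, $g_3(s_1,s_2,s_3)=\tfrac16\mathcal K(s_1+s_2+s_3)^{-1}\big(\mathcal H(s_1+s_2,s_3)(g_2(s_1,s_2)\otimes g_1(s_3))+\mathcal H(s_1+s_3,s_2)(g_2(s_1,s_3)\otimes g_1(s_2))+\mathcal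 H(s_2+s_3,s_1)(g_2(s_2,s_3)\otimes g_1(s_1))+\mathcal H(s_1,s_2+s_3)(g_1(s_1)\otimes g_2(s_2,s_3))+\mathcal H(s_2,s_1+s_3)(g_1(s_2)\otimes g_2(s_1,s_3))+\mathcal H(s_3,s_1+s_2)(g_1(s_3)\otimes g_2(s_1,s_2))+\mathcal N(s_1+s_2)(I_m\otimes g_2(s_1,s_2))+\mathcal N(s_1+s_3)(I_m\otimes g_2(s_1,s_3))+\mathcal N(s_2+s_3)(I_m\otimes g_2(s_2,s_3))\big)$, wherever the inverses exist; $\otimes$ is the Kronecker product. The reduced-order system obtained by projection with $V,W\in\mathbb C^{n\times r}$ is given by $\widehat{\mathcal C}(s)=\mathcal C(s)V$, $\widehat{\mathcal K}(s)=W^{\mathsf H}\mathcal K(s)V$, $\widehat{\mathcal B}(s)=W^{\mathsf H}\mathcal B(s)$, $\widehat{\mathcal N}(s)=W^{\mathsf H}\mathcal N(s)(I_m\otimes V)$, $\widehat{\mathcal H}(s_1,s_2)=W^{\mathsf H}\mathcal H(s_1,s_2)(V\otimes V)$, where $W^{\mathsf H}$ is the conjugate transpose and $\mathcal K(s)^{-\mathsf H}=(\mathcal K(s)^{-1})^{\mathsf H}$; its transfer functions $\widehat G_k$ are defined by the same formulas with hatted functions. *)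

From HB Require Import structures.
From mathcomp Require Import all_boot all_order all_algebra.
From mathcomp Require Import mxtens.
Set Implicit Arguments. Unset Strict Implicit. Unset Printing Implicit Defensive.
Import Order.TTheory GRing.Theory Num.Theory.
Local Open Scope ring_scope.

(* Complex scalars: any numeric closed field C (e.g. algC, or complex R);
   conjugation is Num.conj (written z^* ). *)

Definition ctmx (C : numClosedFieldType) (m n : nat) (A : 'M[C]_(m, n)) : 'M[C]_(n, m) :=
  (map_mx Num.conj A)^T.

(* Kronecker product: (A *t B) with row/column index i1 * p + i2 (standard
   convention), from mathcomp-real-closed's mxtens. *)

Definition colspan_sub (C : fieldType) (n a b : nat)
  (A : 'M[C]_(n, a)) (B : 'M[C]_(n, b)) : Prop := (A^T <= B^T)%MS.

Section QB.
Variable (C : numClosedFieldType) (n m p : nat).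
Variable (Cf : C -> 'M[C]_(p, n)) (Kf : C -> 'M[C]_n) (Bf : C -> 'M[C]_(n, m))
         (Nf : C -> 'M[C]_(n, m * n)) (Hf : C -> C -> 'M[C]_(n, n * n)).

Definition g1 (s1 : C) : 'M[C]_(n, m) := invmx (Kf s1) *m Bf s1.

Definition g2 (s1 s2 : C) : 'M[C]_(n, m * m) :=
  (2%:R)^-1 *: (invmx (Kf (s1 + s2)) *m
    (Hf s1 s2 *m (g1 s1 *t g1 s2) + Hf s2 s1 *m (g1 s2 *t g1 s1)
     + Nf s1 *m (1%:M *t g1 s1) + Nf s2 *m (1%:M *t g1 s2))).

(* identification of the column index sets m * (m * m) and m * m * m;
   castmx preserves the numerical index, as in the paper *)
Definition cast3 (A : 'M[C]_(n, m * (m * m))) : 'M[C]_(n, m * m * m) :=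
  castmx (erefl n, mulnA m m m) A.

Definition g3 (s1 s2 s3 : C) : 'M[C]_(n, m * m * m) :=
  (6%:R)^-1 *: (invmx (Kf (s1 + s2 + s3)) *m
    (Hf (s1 + s2) s3 *m (g2 s1 s2 *t g1 s3)
     + Hf (s1 + s3) s2 *m (g2 s1 s3 *t g1 s2)
     + Hf (s2 + s3) s1 *m (g2 s2 s3 *t g1 s1)
     + cast3 (Hf s1 (s2 + s3) *m (g1 s1 *t g2 s2 s3))
     + cast3 (Hf s2 (s1 + s3) *m (g1 s2 *t g2 s1 s3))
     + cast3 (Hf s3 (s1 + s2) *m (g1 s3 *t g2 s1 s2))
     + cast3 (Nf (s1 + s2) *m (1%:M *t g2 s1 s2))
     + cast3 (Nf (s1 + s3) *m (1%:M *t g2 s1 s3))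
     + cast3 (Nf (s2 + s3) *m (1%:M *t g2 s2 s3)))).

Definition G1 (s1 : C) : 'M[C]_(p, m) := Cf s1 *m g1 s1.
Definition G2 (s1 s2 : C) : 'M[C]_(p, m * m) := Cf (s1 + s2) *m g2 s1 s2.
Definition G3 (s1 s2 s3 : C) : 'M[C]_(p, m * m * m) :=
  Cf (s1 + s2 + s3) *m g3 s1 s2 s3.
End QB.

Section Reduced.
Variable (C : numClosedFieldType) (n m p r : nat).
Variable (V W : 'M[C]_(n, r)).
Variable (Cf : C -> 'M[C]_(p, n)) (Kf : C -> 'M[C]_n) (Bf : C -> 'M[C]_(n, m))
         (Nf : C -> 'M[C]_(n, m * n)) (Hf : C -> C -> 'M[C]_(n, n * n)).
Definition redC (s : C) : 'M[C]_(p, r) := Cf s *m V.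
Definition redK (s : C) : 'M[C]_r := ctmx W *m Kf s *m V.
Definition redB (s : C) : 'M[C]_(r, m) := ctmx W *m Bf s.
Definition redN (s : C) : 'M[C]_(r, m * r) :=
  ctmx W *m Nf s *m (1%:M *t V : 'M[C]_(m * n, m * r)).
Definition redH (s1 s2 : C) : 'M[C]_(r, r * r) := ctmx W *m Hf s1 s2 *m (V *t V).
End Reduced.

Section Interp.
Variable (C : numClosedFieldType) (n m p : nat).
Variable (Cf : C -> 'M[C]_(p, n)) (Kf : C -> 'M[C]_n) (Bf : C -> 'M[C]_(n, m))
         (Nf : C -> 'M[C]_(n, m * n)) (Hf : C -> C -> 'M[C]_(n, n * n)).
Variable sigma : C.
Definition Vi1 : 'M[C]_(n, m) := invmx (Kf sigma) *m Bf sigma.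
Definition Vi2 : 'M[C]_(n, m * m) :=
  invmx (Kf (2%:R * sigma)) *m
   (Hf sigma sigma *m (Vi1 *t Vi1) + Nf sigma *m (1%:M *t Vi1)).
Definition Vi3 : 'M[C]_(n, m * m * m) :=
  invmx (Kf (3%:R * sigma)) *m
   (Hf (2%:R * sigma) sigma *m (Vi2 *t Vi1)
    + cast3 (Hf sigma (2%:R * sigma) *m (Vi1 *t Vi2))
    + cast3 (Nf (2%:R * sigma) *m (1%:M *t Vi2))).
Definition Wi1 : 'M[C]_(n, p) := ctmx (invmx (Kf (2%:R * sigma))) *m ctmx (Cf (2%:R * sigma)).
Definition Wi2 : 'M[C]_(n, p) := ctmx (invmx (Kf (3%:R * sigma))) *m ctmx (Cf (3%:R * sigma)).
End Interp.

From HB Require Import structures.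
From mathcomp Require Import all_boot all_order all_algebra.
From mathcomp Require Import mxtens.
Import Order.TTheory GRing.Theory Num.Theory.
Local Open Scope ring_scope.
Set Implicit Arguments. Unset Strict Implicit. Unset Printing Implicit Defensive.

(* Everything rests on two Petrov-Galerkin facts for a single resolvent
   solve x = K^-1 f and its reduced counterpart x^ = (W^H K V)^-1 W^H f:
   - if x lies in span V then V x^ = x            (galerkin_state);
   - if K^-H C^H lies in span W then C V x^ = C x (galerkin_output).
   Each subsystem state g_k is such a solve with a right-hand side built
   from the lower states g_1, ..., g_(k-1) (forcing2, forcing3).  The
   reduced forcing term is W^H times the full one evaluated at the lifted
   reduced states (forcing2_red, forcing3_red); once the lower reduced
   states are lifted exactly by V, both facts apply level by level:
   stateK_match gives V g^_k = g_k and outputK_match gives G_k = G^_k.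
   At the diagonal frequencies the states are exactly the vectors of the
   theorem: g_1(s) = V1, g_2(s,s) = V2 and g_3(s,s,s) = V3 / 2 (g2_diag,
   g3_diag), so the span hypotheses of (a), (b), (c) are what the level
   lemmas need, and the theorem is a direct combination of them. *)

Section ConjTranspose.
Variable C : numClosedFieldType.

Lemma ctmxM (a b c : nat) (A : 'M[C]_(a, b)) (B : 'M[C]_(b, c)) :
  ctmx (A *m B) = ctmx B *m ctmx A.
Proof. by rewrite /ctmx map_mxM trmx_mul. Qed.

Lemma ctmxK (a b : nat) (A : 'M[C]_(a, b)) : ctmx (ctmx A) = A.
Proof. by apply/matrixP=> i j; rewrite !mxE conjCK. Qed.
End ConjTranspose.

Section ColumnSpan.
Variable F : fieldType.

Lemma colspan_subP (n a b : nat) (A : 'M[F]_(n, a)) (B : 'M[F]_(n, b)) :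
  colspan_sub A B -> exists X, A = B *m X.
Proof.
by move=> /submxP [D defA]; exists D^T; rewrite -(trmxK A) defA trmx_mul trmxK.
Qed.

Lemma colspan_subZ (n a b : nat) (c : F) (A : 'M[F]_(n, a)) (B : 'M[F]_(n, b)) :
  colspan_sub A B -> colspan_sub (c *: A) B.
Proof. by rewrite /colspan_sub linearZ /=; exact: scalemx_sub. Qed.
End ColumnSpan.

Section PetrovGalerkin.
Variables (C : numClosedFieldType) (n r q : nat).
Variables (V W : 'M[C]_(n, r)) (K : 'M[C]_n) (f : 'M[C]_(n, q)).
Hypotheses (unitK : K \in unitmx) (unitKr : ctmx W *m K *m V \in unitmx).

Lemma galerkin_state :
  colspan_sub (invmx K *m f) V ->
  V *m (invmx (ctmx W *m K *m V) *m (ctmx W *m f)) = invmx K *m f.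
Proof.
move=> /colspan_subP [X defX].
have -> : ctmx W *m f = ctmx W *m K *m V *m X by rewrite -!mulmxA -defX mulKVmx.
by rewrite mulKmx.
Qed.

Lemma galerkin_output (p : nat) (Cm : 'M[C]_(p, n)) :
  colspan_sub (ctmx (invmx K) *m ctmx Cm) W ->
  Cm *m V *m (invmx (ctmx W *m K *m V) *m (ctmx W *m f)) = Cm *m (invmx K *m f).
Proof.
move=> /colspan_subP [Z defZ].
have CKinv : Cm *m invmx K = ctmx Z *m ctmx W by rewrite -ctmxM -defZ ctmxM !ctmxK.
have -> : Cm *m V = ctmx Z *m (ctmx W *m K *m V).
  by rewrite -[Cm]mulmx1 -(mulVmx unitK) !mulmxA CKinv -!mulmxA.
by rewrite -mulmxA mulKVmx // mulmxA -CKinv mulmxA.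
Qed.
End PetrovGalerkin.

(* cast3 only reindexes columns, so it commutes with left multiplication. *)
Lemma cast3M (C : numClosedFieldType) (n k m : nat)
  (A : 'M[C]_(n, k)) (B : 'M[C]_(k, m * (m * m))) :
  cast3 (A *m B) = A *m cast3 B.
Proof. by rewrite /cast3 castmx_mul castmx_id. Qed.

Lemma sum_of_triples (M : zmodType) (a b c : M) :
  a + a + a + b + b + b + c + c + c = (a + b + c) *+ 3.
Proof. by rewrite !mulrnDl !mulrSr !mulr0n !add0r !addrA. Qed.

Lemma sum_of_pairs (M : zmodType) (a b : M) : a + a + b + b = (a + b) *+ 2.
Proof. by rewrite !mulrnDl !mulrSr !mulr0n !add0r !addrA. Qed.

Section Subsystems.
Variables (C : numClosedFieldType) (n m p r : nat) (V W : 'M[C]_(n, r)).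
Variables (Cf : C -> 'M[C]_(p, n)) (Kf : C -> 'M[C]_n) (Bf : C -> 'M[C]_(n, m))
          (Nf : C -> 'M[C]_(n, m * n)) (Hf : C -> C -> 'M[C]_(n, n * n)).

Notation rC := (redC V Cf). Notation rK := (redK V W Kf).
Notation rB := (redB W Bf). Notation rN := (redN V W Nf).
Notation rH := (redH V W Hf).

(* The forcing terms of the resolvent equations for g2 and g3, as functions
   of the lower-order states x_i = g1(s_i) and x_ij = g2(s_i, s_j), for an
   arbitrary system (N, H) of state dimension k. *)
Definition forcing2 (k : nat) (Ng : C -> 'M[C]_(k, m * k))
    (Hg : C -> C -> 'M[C]_(k, k * k)) (s1 s2 : C) (x1 x2 : 'M[C]_(k, m)) :
    'M[C]_(k, m * m) :=
  Hg s1 s2 *m (x1 *t x2) + Hg s2 s1 *m (x2 *t x1)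
  + Ng s1 *m (1%:M *t x1) + Ng s2 *m (1%:M *t x2).

Definition forcing3 (k : nat) (Ng : C -> 'M[C]_(k, m * k))
    (Hg : C -> C -> 'M[C]_(k, k * k)) (s1 s2 s3 : C) (x1 x2 x3 : 'M[C]_(k, m))
    (x12 x13 x23 : 'M[C]_(k, m * m)) : 'M[C]_(k, m * m * m) :=
  Hg (s1 + s2) s3 *m (x12 *t x3) + Hg (s1 + s3) s2 *m (x13 *t x2)
  + Hg (s2 + s3) s1 *m (x23 *t x1)
  + cast3 (Hg s1 (s2 + s3) *m (x1 *t x23)) + cast3 (Hg s2 (s1 + s3) *m (x2 *t x13))
  + cast3 (Hg s3 (s1 + s2) *m (x3 *t x12))
  + cast3 (Ng (s1 + s2) *m (1%:M *t x12)) + cast3 (Ng (s1 + s3) *m (1%:M *t x13))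
  + cast3 (Ng (s2 + s3) *m (1%:M *t x23)).

Lemma g2E (k : nat) (Kg : C -> 'M[C]_k) Bg Ng Hg (s1 s2 : C) :
  g2 Kg Bg Ng Hg s1 s2 = invmx (Kg (s1 + s2)) *m
    (2%:R^-1 *: forcing2 Ng Hg s1 s2 (g1 Kg Bg s1) (g1 Kg Bg s2)).
Proof. by rewrite -scalemxAr. Qed.

Lemma g3E (k : nat) (Kg : C -> 'M[C]_k) Bg Ng Hg (s1 s2 s3 : C) :
  g3 Kg Bg Ng Hg s1 s2 s3 = invmx (Kg (s1 + s2 + s3)) *m
    (6%:R^-1 *: forcing3 Ng Hg s1 s2 s3 (g1 Kg Bg s1) (g1 Kg Bg s2) (g1 Kg Bg s3)
       (g2 Kg Bg Ng Hg s1 s2) (g2 Kg Bg Ng Hg s1 s3) (g2 Kg Bg Ng Hg s2 s3)).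
Proof. by rewrite -scalemxAr. Qed.

Lemma redH_tens (a b : C) (q1 q2 : nat) (X : 'M[C]_(r, q1)) (Y : 'M[C]_(r, q2)) :
  rH a b *m (X *t Y) = ctmx W *m (Hf a b *m ((V *m X) *t (V *m Y))).
Proof. by rewrite /redH -!mulmxA tensmx_mul. Qed.

Lemma redN_tens (a : C) (q : nat) (X : 'M[C]_(r, q)) :
  rN a *m (1%:M *t X) = ctmx W *m (Nf a *m (1%:M *t (V *m X))).
Proof. by rewrite /redN -!mulmxA tensmx_mul mul1mx. Qed.

Lemma forcing2_red (s1 s2 : C) (x1 x2 : 'M[C]_(r, m)) :
  forcing2 rN rH s1 s2 x1 x2 = ctmx W *m forcing2 Nf Hf s1 s2 (V *m x1) (V *m x2).
Proof. by rewrite /forcing2 !redH_tens !redN_tens -!mulmxDr. Qed.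

Lemma forcing3_red (s1 s2 s3 : C) (x1 x2 x3 : 'M[C]_(r, m))
    (x12 x13 x23 : 'M[C]_(r, m * m)) :
  forcing3 rN rH s1 s2 s3 x1 x2 x3 x12 x13 x23 = ctmx W *m
    forcing3 Nf Hf s1 s2 s3 (V *m x1) (V *m x2) (V *m x3)
      (V *m x12) (V *m x13) (V *m x23).
Proof. by rewrite /forcing3 !redH_tens !redN_tens !cast3M -!mulmxDr. Qed.

Lemma output_of_state (q : nat) (Cm : 'M[C]_(p, n)) (g : 'M[C]_(n, q)) gr :
  V *m gr = g -> Cm *m g = Cm *m V *m gr.
Proof. by move=> <-; rewrite mulmxA. Qed.

Section AtFrequency.
Variables s1 s2 s3 : C.

Lemma state1_match :
  Kf s1 \in unitmx -> rK s1 \in unitmx ->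
  colspan_sub (g1 Kf Bf s1) V -> V *m g1 rK rB s1 = g1 Kf Bf s1.
Proof. exact: galerkin_state. Qed.

Lemma state2_match :
  Kf (s1 + s2) \in unitmx -> rK (s1 + s2) \in unitmx ->
  V *m g1 rK rB s1 = g1 Kf Bf s1 -> V *m g1 rK rB s2 = g1 Kf Bf s2 ->
  colspan_sub (g2 Kf Bf Nf Hf s1 s2) V ->
  V *m g2 rK rB rN rH s1 s2 = g2 Kf Bf Nf Hf s1 s2.
Proof.
move=> uK uKr e1 e2; rewrite !g2E forcing2_red e1 e2 scalemxAr.
exact: galerkin_state.
Qed.

Lemma state3_match :
  Kf (s1 + s2 + s3) \in unitmx -> rK (s1 + s2 + s3) \in unitmx ->
  V *m g1 rK rB s1 = g1 Kf Bf s1 -> V *m g1 rK rB s2 = g1 Kf Bf s2 ->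
  V *m g1 rK rB s3 = g1 Kf Bf s3 ->
  V *m g2 rK rB rN rH s1 s2 = g2 Kf Bf Nf Hf s1 s2 ->
  V *m g2 rK rB rN rH s1 s3 = g2 Kf Bf Nf Hf s1 s3 ->
  V *m g2 rK rB rN rH s2 s3 = g2 Kf Bf Nf Hf s2 s3 ->
  colspan_sub (g3 Kf Bf Nf Hf s1 s2 s3) V ->
  V *m g3 rK rB rN rH s1 s2 s3 = g3 Kf Bf Nf Hf s1 s2 s3.
Proof.
move=> uK uKr e1 e2 e3 e12 e13 e23.
rewrite !g3E forcing3_red e1 e2 e3 e12 e13 e23 scalemxAr.
exact: galerkin_state.
Qed.

Lemma output1_match :
  Kf s1 \in unitmx -> rK s1 \in unitmx ->
  colspan_sub (ctmx (invmx (Kf s1)) *m ctmx (Cf s1)) W ->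
  G1 Cf Kf Bf s1 = G1 rC rK rB s1.
Proof. by move=> uK uKr hW; rewrite /G1 /redC (galerkin_output _ uK uKr hW). Qed.

Lemma output2_match :
  Kf (s1 + s2) \in unitmx -> rK (s1 + s2) \in unitmx ->
  V *m g1 rK rB s1 = g1 Kf Bf s1 -> V *m g1 rK rB s2 = g1 Kf Bf s2 ->
  colspan_sub (ctmx (invmx (Kf (s1 + s2))) *m ctmx (Cf (s1 + s2))) W ->
  G2 Cf Kf Bf Nf Hf s1 s2 = G2 rC rK rB rN rH s1 s2.
Proof.
move=> uK uKr e1 e2 hW; rewrite /G2 /redC !g2E forcing2_red e1 e2 scalemxAr.
by rewrite (galerkin_output _ uK uKr hW).
Qed.

Lemma output3_match :
  Kf (s1 + s2 + s3) \in unitmx -> rK (s1 + s2 + s3) \in unitmx ->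
  V *m g1 rK rB s1 = g1 Kf Bf s1 -> V *m g1 rK rB s2 = g1 Kf Bf s2 ->
  V *m g1 rK rB s3 = g1 Kf Bf s3 ->
  V *m g2 rK rB rN rH s1 s2 = g2 Kf Bf Nf Hf s1 s2 ->
  V *m g2 rK rB rN rH s1 s3 = g2 Kf Bf Nf Hf s1 s3 ->
  V *m g2 rK rB rN rH s2 s3 = g2 Kf Bf Nf Hf s2 s3 ->
  colspan_sub (ctmx (invmx (Kf (s1 + s2 + s3))) *m ctmx (Cf (s1 + s2 + s3))) W ->
  G3 Cf Kf Bf Nf Hf s1 s2 s3 = G3 rC rK rB rN rH s1 s2 s3.
Proof.
move=> uK uKr e1 e2 e3 e12 e13 e23 hW.
rewrite /G3 /redC !g3E forcing3_red e1 e2 e3 e12 e13 e23 scalemxAr.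
by rewrite (galerkin_output _ uK uKr hW).
Qed.
End AtFrequency.

Lemma mul2_sum (s : C) : 2%:R * s = s + s.
Proof. by rewrite mulr_natl mulr2n. Qed.

Lemma mul3_sum (s : C) : 3%:R * s = s + s + s.
Proof. by rewrite mulr_natl !mulrSr mulr0n add0r. Qed.

Lemma g2_diag (s : C) : g2 Kf Bf Nf Hf s s = Vi2 Kf Bf Nf Hf s.
Proof.
rewrite g2E /forcing2 sum_of_pairs -scaler_nat scalerA mulVf ?pnatr_eq0 //.
by rewrite scale1r /Vi2 mul2_sum.
Qed.

(* ... and the third is V3 / 2, since the symmetrized sum has 6 terms that
   pair up into 3 copies of the expression defining V3. *)
Lemma g3_diag (s : C) : g3 Kf Bf Nf Hf s s s = 2%:R^-1 *: Vi3 Kf Bf Nf Hf s.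
Proof.
rewrite g3E /forcing3 sum_of_triples -scaler_nat scalerA.
have -> : 6%:R^-1 * 3%:R = 2%:R^-1 :> C.
  by rewrite -[6%N]/(2 * 3)%N natrM invfM -mulrA mulVf ?pnatr_eq0 // mulr1.
by rewrite /Vi3 scalemxAr g2_diag mul2_sum mul3_sum.
Qed.
End Subsystems.

Theorem theorem4p3 (C : numClosedFieldType) (n m p r : nat)
  (Cf : C -> 'M[C]_(p, n)) (Kf : C -> 'M[C]_n) (Bf : C -> 'M[C]_(n, m))
  (Nf : C -> 'M[C]_(n, m * n)) (Hf : C -> C -> 'M[C]_(n, n * n))
  (V W : 'M[C]_(n, r)) (sigma : C) :
  \rank V = r -> \rank W = r ->
  Kf sigma \in unitmx -> Kf (2%:R * sigma) \in unitmx -> Kf (3%:R * sigma) \in unitmx ->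
  redK V W Kf sigma \in unitmx ->
  redK V W Kf (2%:R * sigma) \in unitmx ->
  redK V W Kf (3%:R * sigma) \in unitmx ->
  let rC := redC V Cf in let rK := redK V W Kf in let rB := redB W Bf in
  let rN := redN V W Nf in let rH := redH V W Hf in
  [/\
   (* (a) *)
   (colspan_sub (Vi1 Kf Bf sigma) V ->
    colspan_sub (Vi2 Kf Bf Nf Hf sigma) V ->
    colspan_sub (Vi3 Kf Bf Nf Hf sigma) V ->
      [/\ G1 Cf Kf Bf sigma = G1 rC rK rB sigma,
          G2 Cf Kf Bf Nf Hf sigma sigma = G2 rC rK rB rN rH sigma sigma &
          G3 Cf Kf Bf Nf Hf sigma sigma sigma = G3 rC rK rB rN rH sigma sigma sigma]),
   (* (b) *)
   (colspan_sub (Vi1 Kf Bf sigma) V ->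
    colspan_sub (Wi1 Cf Kf sigma) W ->
      [/\ G1 Cf Kf Bf sigma = G1 rC rK rB sigma,
          G1 Cf Kf Bf (2%:R * sigma) = G1 rC rK rB (2%:R * sigma) &
          G2 Cf Kf Bf Nf Hf sigma sigma = G2 rC rK rB rN rH sigma sigma]) &
   (* (c) *)
   (colspan_sub (Vi1 Kf Bf sigma) V ->
    colspan_sub (Vi2 Kf Bf Nf Hf sigma) V ->
    colspan_sub (Wi2 Cf Kf sigma) W ->
      [/\ G1 Cf Kf Bf sigma = G1 rC rK rB sigma,
          G1 Cf Kf Bf (3%:R * sigma) = G1 rC rK rB (3%:R * sigma),
          G2 Cf Kf Bf Nf Hf sigma sigma = G2 rC rK rB rN rH sigma sigma &
          G3 Cf Kf Bf Nf Hf sigma sigma sigma = G3 rC rK rB rN rH sigma sigma sigma])].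
Proof.
move=> _ _ uK1 uK2 uK3 uR1 uR2 uR3 rC rK rB rN rH.
have [uK2' uR2'] := (uK2, uR2); rewrite mul2_sum in uK2' uR2'.
have [uK3' uR3'] := (uK3, uR3); rewrite mul3_sum in uK3' uR3'.
have lift1 : colspan_sub (Vi1 Kf Bf sigma) V ->
    V *m g1 rK rB sigma = g1 Kf Bf sigma.
  exact: state1_match.
have lift2 : colspan_sub (Vi1 Kf Bf sigma) V -> colspan_sub (Vi2 Kf Bf Nf Hf sigma) V ->
    V *m g2 rK rB rN rH sigma sigma = g2 Kf Bf Nf Hf sigma sigma.
  move=> hv1 hv2; apply: (state2_match uK2' uR2' (lift1 hv1) (lift1 hv1)).
  by rewrite g2_diag.
split=> [hv1 hv2 hv3 | hv1 hw1 | hv1 hv2 hw2].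
- have hg3 : colspan_sub (g3 Kf Bf Nf Hf sigma sigma sigma) V.
    by rewrite g3_diag; exact: colspan_subZ.
  have [e1 e2] := (lift1 hv1, lift2 hv1 hv2).
  split; [exact: output_of_state e1 | exact: output_of_state e2 |].
  exact: output_of_state (state3_match uK3' uR3' e1 e1 e1 e2 e2 e2 hg3).
- have e1 := lift1 hv1.
  split; [exact: output_of_state e1 | exact: output1_match |].
  by apply: (output2_match Nf Hf uK2' uR2' e1 e1); rewrite -mul2_sum.
- have [e1 e2] := (lift1 hv1, lift2 hv1 hv2).
  split; [exact: output_of_state e1 | exact: output1_match
         | exact: output_of_state e2 |].
  by apply: (output3_match uK3' uR3' e1 e1 e1 e2 e2 e2); rewrite -mul3_sum.
Qed.
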